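(* Let $\lambda$ be a nonzero real number. For every integer $m\ge 0$, as an identity of power series in $x$ (equivalently for $|x|<1$), $$\sum_{k=0}^{\infty}\big((0)_{m,\lambda}+(1)_{m,\lambda}+\cdots+(k)_{m,\lambda}\big)x^{k}=\frac{1}{(1-x)^{2}}\sum_{l=0}^{m}S_{1}(m,l)\lambda^{m-l}\,W_{l}\!\left(\frac{x}{1-x}\right).$$
   Context: The $\lambda$-falling factorials are $(x)_{0,\lambda}=1$, $(x)_{m,\lambda}=x(x-\lambda)\cdots(x-(m-1)\lambda)$ for $m\ge1$. The (signed) Stirling numbers of the first kind $S_1(m,l)$ are defined by $(x)_m=\sum_{l=0}^m S_1(m,l)x^l$, where $(x)_m=x(x-1)\cdots(x-m+1)$, $(x)_0=1$. The Stirling numbers of the second kind $S_2(n,k)$ are defined by $x^n=\sum_{k=0}^n S_2(n,k)(x)_k$. The geometric polynomials are $W_{n}(x)=\sum_{k=0}^{n}S_{2}(n,k)\,k!\,x^{k}$. *)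

From HB Require Import structures.
From mathcomp Require Import all_boot all_order all_algebra.
From mathcomp Require Import all_classical all_reals all_analysis.
Set Implicit Arguments. Unset Strict Implicit. Unset Printing Implicit Defensive.
Import Order.TTheory GRing.Theory Num.Theory.
Local Open Scope ring_scope.

Definition lfall (R : ringType) (x lam : R) (m : nat) : R :=
  \prod_(i < m) (x - i%:R * lam).

Definition S1 (m l : nat) : int :=
  (\prod_(i < m) ('X - (i%:R)%:P) : {poly int})`_l.

Fixpoint S2 (n k : nat) : nat :=
  match n, k with
  | 0, 0 => 1
  | 0, _.+1 => 0
  | _.+1, 0 => 0
  | n'.+1, k'.+1 => (k'.+1 * S2 n' k'.+1 + S2 n' k')%N
  end.

Definition W (R : ringType) (n : nat) (x : R) : R :=
  \sum_(k < n.+1) ((S2 n k * k`!)%N)%:R * x ^+ k.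

From HB Require Import structures.
From mathcomp Require Import all_boot all_order all_algebra.
From mathcomp Require Import all_classical all_reals all_analysis.
From mathcomp Require Import ring.
Import Order.TTheory GRing.Theory Num.Theory.
Import numFieldNormedType.Exports.
Local Open Scope classical_set_scope.
Local Open Scope ring_scope.

(* Write (j)_{m,lam} = sum_l S1(m,l) lam^(m-l) j^l and expand j^l in falling
   factorials j^_i with the coefficients S2(l,i); by the hockey-stick identity
   sum_(j <= N) j^_i = i! C(N+1,i+1).  Everything then reduces to the series
   sum_N C(N+1,i+1) x^N = x^i/(1-x)^(i+2), which follows by induction from the
   telescoping relation (1-x) sum_N C(N,k+1) x^N = x sum_N C(N,k) x^N; the
   boundary terms C(n,k) x^n vanish because the same relation bounds the
   partial sums of sum_N C(N,k) |x|^N. *)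

Lemma S2_small l i : (l < i)%N -> S2 l i = 0%N.
Proof.
elim: l i => [|l IHl] [|i] //= lt_li.
by rewrite !IHl ?muln0 // ltnW.
Qed.

Lemma muln_ffact j i : (j * j ^_ i = j ^_ i.+1 + i * j ^_ i)%N.
Proof.
rewrite ffactnSr; have [le_ij | lt_ji] := leqP i j.
  by rewrite -{1}(subnK le_ij) mulnDl mulnC.
by rewrite ffact_small // !muln0.
Qed.

Lemma expn_S2_ffact j l n : (l < n)%N ->
  (j ^ l = \sum_(i < n) S2 l i * j ^_ i)%N.
Proof.
elim: l n => [|l IHl] [|n] //= lt_ln.
  by rewrite big_ord_recl big1 ?addn0 ?muln1.
rewrite big_ord_recl mul0n add0n expnS (IHl n) // big_distrr /=.
under eq_bigr do rewrite mulnCA muln_ffact mulnDr.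
under [in RHS]eq_bigr do rewrite mulnDl.
rewrite !big_split /= addnC; congr (_ + _)%N; case: n lt_ln => // n lt_ln.
rewrite big_ord_recl big_ord_recr /= (@S2_small l n.+1) // !muln0 addn0 add0n.
apply: eq_bigr => i _.
by rewrite /bump /= !add1n mulnCA mulnA.
Qed.

Lemma hockey_stick N i : (\sum_(j < N.+1) 'C(j, i) = 'C(N.+1, i.+1))%N.
Proof.
elim: N => [|N IHN]; first by rewrite big_ord1 binS bin0n.
by rewrite big_ord_recr /= IHN [in RHS]binS.
Qed.

Lemma sum_expn_S2 N l :
  (\sum_(j < N.+1) j ^ l = \sum_(i < l.+1) S2 l i * i`! * 'C(N.+1, i.+1))%N.
Proof.
under eq_bigr do rewrite (@expn_S2_ffact _ l l.+1) //.
rewrite exchange_big /=; apply: eq_bigr => i _.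
rewrite -hockey_stick big_distrr /=; apply: eq_bigr => j _.
by rewrite -bin_ffact mulnA mulnAC.
Qed.

Lemma lfall_S1 (F : fieldType) (y lam : F) m : lam != 0 ->
  lfall y lam m = \sum_(l < m.+1) (S1 m l)%:~R * lam ^+ (m - l) * y ^+ l.
Proof.
move=> lam_neq0.
pose P : {poly int} := \prod_(i < m) ('X - (i%:R)%:P).
have map_P : map_poly intr P = \prod_(i < m) ('X - (i%:R : F)%:P).
  rewrite rmorph_prod; apply: eq_bigr => i _.
  by rewrite rmorphB /= map_polyX map_polyC /= rmorph_nat.
have size_P : size (map_poly intr P : {poly F}) = m.+1.
  rewrite map_P -(big_mkord xpredT (fun i => 'X - (i%:R : F)%:P)).
  rewrite /index_iota subn0 -(big_map (fun i => (i%:R : F)) xpredT (fun c => 'X - c%:P)).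
  by rewrite size_prod_XsubC size_map size_iota.
have -> : lfall y lam m = lam ^+ m * (map_poly intr P).[y / lam].
  rewrite map_P /lfall horner_prod -[in lam ^+ m](card_ord m) -prodr_const.
  rewrite -big_split /=; apply: eq_bigr => i _.
  by rewrite hornerXsubC mulrBr mulrCA divff // mulr1 mulrC.
rewrite (horner_coef_wide _ (eq_leq size_P)) mulr_sumr; apply: eq_bigr => l _.
have le_lm : (l <= m)%N by rewrite -ltnS.
rewrite coef_map /= expr_div_n mulrCA -[in lam ^+ m](subnK le_lm) exprD.
by rewrite -mulrA; congr (_ * _); field; exact: expf_neq0.
Qed.

Lemma sum_lfall (F : fieldType) (lam : F) m N : lam != 0 ->
  \sum_(j < N.+1) lfall (j%:R : F) lam m =
  \sum_(l < m.+1) (S1 m l)%:~R * lam ^+ (m - l) *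
    \sum_(i < l.+1) (S2 l i * i`!)%:R * 'C(N.+1, i.+1)%:R.
Proof.
move=> lam_neq0; under eq_bigr do rewrite lfall_S1 //.
rewrite exchange_big /=; apply: eq_bigr => l _; rewrite -mulr_sumr; congr (_ * _).
rewrite (eq_bigr (fun j : 'I_N.+1 => (j ^ l)%:R)); last by move=> j _; rewrite natrX.
rewrite -natr_sum sum_expn_S2 natr_sum.
by apply: eq_bigr => i _; rewrite natrM.
Qed.

Lemma W_div_1Bx (F : fieldType) (x : F) l : x != 1 ->
  ((1 - x) ^+ 2)^-1 * W l (x / (1 - x)) =
  \sum_(i < l.+1) (S2 l i * i`!)%:R * (x ^+ i / (1 - x) ^+ i.+2).
Proof.
move=> x_neq1; have subx_neq0 : 1 - x != 0 by rewrite subr_eq0 eq_sym.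
rewrite /W mulr_sumr; apply: eq_bigr => i _; rewrite mulrCA expr_div_n.
by congr (_ * _); rewrite !exprS; field; rewrite subx_neq0 expf_neq0.
Qed.

Lemma series_binS_mul1B (R : comRingType) (x : R) k n :
  series (fun N => 'C(N, k.+1)%:R * x ^+ N) n * (1 - x) =
  x * series (fun N => 'C(N, k)%:R * x ^+ N) n - 'C(n, k.+1)%:R * x ^+ n.
Proof.
elim: n => [|n IHn]; first by rewrite /series /= !big_nil bin0n !(mul0r, mulr0, subr0).
by rewrite !seriesSr mulrDl IHn binS natrD exprS; ring.
Qed.

Lemma normr_lt1_neq1 (R : numDomainType) (x : R) : `|x| < 1 -> x != 1.
Proof. by apply: contraTneq => ->; rewrite normr1 ltxx. Qed.

Section binomial_series.
Variable R : realType.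

Lemma series_bin_le (s : R) k n : 0 <= s < 1 ->
  series (fun N => 'C(N, k)%:R * s ^+ N) n <= s ^+ k / (1 - s) ^+ k.+1.
Proof.
case/andP=> s_ge0 s_lt1; have subs_gt0 : 0 < 1 - s by rewrite subr_gt0.
have subs_neq0 : 1 - s != 0 by rewrite gt_eqF.
elim: k n => [|k IHk] n.
  have -> : (fun N => 'C(N, 0)%:R * s ^+ N) = geometric 1 s.
    by apply/funext => N; rewrite bin0 mul1r /geometric /= mul1r.
  rewrite geometric_seriesE ?lt_eqF //= mul1r expr0 expr1 ler_pM2r ?invr_gt0 //.
  by rewrite gerBl exprn_ge0.
rewrite -(ler_pM2r subs_gt0) series_binS_mul1B.
have -> : s ^+ k.+1 / (1 - s) ^+ k.+2 * (1 - s) = s * (s ^+ k / (1 - s) ^+ k.+1).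
  by rewrite !exprS; field; rewrite expf_neq0 subs_neq0.
apply: le_trans (ler_wpM2l s_ge0 (IHk n)).
by rewrite gerBl mulr_ge0 ?exprn_ge0.
Qed.

Lemma cvg_bin_expr (x : R) k : `|x| < 1 ->
  (fun N => 'C(N, k)%:R * x ^+ N) @ \oo --> 0.
Proof.
move=> x_lt1; apply: norm_cvg0.
under eq_fun do rewrite normrM normrX normr_nat.
apply: cvg_series_cvg_0; apply: nondecreasing_is_cvgn.
  by apply: nondecreasing_series => N _ _; rewrite mulr_ge0 ?exprn_ge0.
exists (`|x| ^+ k / (1 - `|x|) ^+ k.+1) => _ [n _ <-].
by apply: series_bin_le; rewrite normr_ge0.
Qed.

Lemma cvg_series_bin (x : R) k : `|x| < 1 ->
  series (fun N => 'C(N, k)%:R * x ^+ N) @ \oo --> x ^+ k / (1 - x) ^+ k.+1.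
Proof.
move=> x_lt1; have subx_neq0 : 1 - x != 0.
  by rewrite subr_eq0 eq_sym normr_lt1_neq1.
elim: k => [|k IHk].
  have -> : (fun N => 'C(N, 0)%:R * x ^+ N) = geometric 1 x.
    by apply/funext => N; rewrite bin0 mul1r /geometric /= mul1r.
  by rewrite expr0 expr1; apply: cvg_geometric_series.
have -> : series (fun N => 'C(N, k.+1)%:R * x ^+ N) = fun n =>
    (x * series (fun N => 'C(N, k)%:R * x ^+ N) n - 'C(n, k.+1)%:R * x ^+ n) / (1 - x).
  by apply/funext => n; rewrite -series_binS_mul1B mulfK.
have -> : x ^+ k.+1 / (1 - x) ^+ k.+2 = (x * (x ^+ k / (1 - x) ^+ k.+1) - 0) / (1 - x).
  by rewrite !exprS; field; rewrite subx_neq0 expf_neq0.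
apply: cvgMr_tmp; apply: cvgB; last exact: cvg_bin_expr.
exact: cvgMl_tmp.
Qed.

Lemma cvg_series_binSS (x : R) i : `|x| < 1 ->
  series (fun N => 'C(N.+1, i.+1)%:R * x ^+ N) @ \oo --> x ^+ i / (1 - x) ^+ i.+2.
Proof.
move=> x_lt1; have subx_neq0 : 1 - x != 0.
  by rewrite subr_eq0 eq_sym normr_lt1_neq1.
have -> : (fun N => 'C(N.+1, i.+1)%:R * x ^+ N) =
    (fun N => 'C(N, i.+1)%:R * x ^+ N) + (fun N => 'C(N, i)%:R * x ^+ N).
  by apply/funext => N /=; rewrite binS natrD mulrDl.
have -> : x ^+ i / (1 - x) ^+ i.+2 = x ^+ i.+1 / (1 - x) ^+ i.+2 + x ^+ i / (1 - x) ^+ i.+1.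
  by rewrite !exprS; field; rewrite subx_neq0 expf_neq0.
by rewrite seriesD; apply: cvgD; apply: cvg_series_bin.
Qed.

Lemma cvg_series_lincomb (I : Type) (r : seq I) (c : I -> R) (u : I -> R ^nat)
    (L : I -> R) :
  (forall i, series (u i) @ \oo --> L i) ->
  series (fun N => \sum_(i <- r) c i * u i N) @ \oo --> \sum_(i <- r) c i * L i.
Proof.
move=> cvg_u.
have -> : series (fun N => \sum_(i <- r) c i * u i N) =
    fun n => \sum_(i <- r) c i * series (u i) n.
  apply/funext => n; rewrite /series /= exchange_big /=.
  by apply: eq_bigr => i _; rewrite mulr_sumr.
by apply: cvg_big => [|i _]; [exact: add_continuous | exact: cvgMl_tmp].
Qed.

End binomial_series.

Theorem theorem7 (R : realType) (lam : R) (hlam : lam != 0) (m : nat)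
    (x : R) (hx : `|x| < 1) :
  series (fun k : nat => (\sum_(j < k.+1) lfall (j%:R : R) lam m) * x ^+ k)
    @ \oo -->
  ((1 - x) ^+ 2)^-1 *
    \sum_(l < m.+1) (S1 m l)%:~R * lam ^+ (m - l) * W l (x / (1 - x)).
Proof.
have termE N : (\sum_(j < N.+1) lfall (j%:R : R) lam m) * x ^+ N =
    \sum_(l < m.+1) (S1 m l)%:~R * lam ^+ (m - l) *
      \sum_(i < l.+1) (S2 l i * i`!)%:R * ('C(N.+1, i.+1)%:R * x ^+ N).
  rewrite sum_lfall // mulr_suml; apply: eq_bigr => l _.
  rewrite -[_ * x ^+ N]mulrA mulr_suml; congr (_ * _).
  by apply: eq_bigr => i _; rewrite mulrA.
under eq_fun do rewrite termE.
rewrite mulr_sumr; under eq_bigr do rewrite mulrCA W_div_1Bx ?normr_lt1_neq1 //.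
apply: cvg_series_lincomb => l; apply: cvg_series_lincomb => i.
exact: cvg_series_binSS.
Qed.
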